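(* Let $\mathcal{D}$ be a probability distribution over triples $(x,y,z)$, and let $S=\{(x_1,y_1,z_1),\dots,(x_N,y_N,z_N)\}$ be a finite sample. For parameters $u\in\mathcal{U}$, $v\in\mathcal{V}$, $w\in\mathcal{W}$ and $\rho>0$, define the joint loss $$l_J(x,y,z;u,v,w) = -l_p(h_p(g(x;u);v),y) + \rho\, l_u(h_u(g(x;u);w),z).$$ Let $(u^\ast,v^\ast,w^\ast)$ be a solution of the expected-risk problem, i.e. $v^\ast=v^\ast(u^\ast)$, $w^\ast=w^\ast(u^\ast)$ and $u^\ast$ minimizes $u\mapsto E_{\mathcal{D}}[l_J(u,v^\ast(u),w^\ast(u))]$, where $v^\ast(u)\in\arg\max_v E_{\mathcal{D}}[-l_p(u,v)]$ and $w^\ast(u)\in\arg\min_w E_{\mathcal{D}}[l_u(u,w)]$; equivalently $$E_{\mathcal{D}}[l_J(u^\ast,v^\ast,w^\ast)] = \min_u\Big[\max_v E_{\mathcal{D}}[-l_p(u,v)] + \rho\min_w E_{\mathcal{D}}[l_u(u,w)]\Big].$$ Let $(\hat u,\hat v,\hat w)$ be the analogous solution of the empirical problem, with $E_{\mathcal{D}}$ replaced by the empirical mean $E_S$ (so $\hat v=\hat v(\hat u)$, $\hat w=\hat w(\hat u)$ with $\hat v(u)\in\arg\max_v E_S[-l_p(u,v)]$, $\hat w(u)\in\arg\min_w E_S[l_u(u,w)]$, and $\hat u$ minimizes $u\mapsto E_S[l_J(u,\hat v(u),\hat w(u))]$). Then $$\big| E_{\mathcal{D}}[l_J(\hat u,\hat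 v,\hat w)] - E_{\mathcal{D}}[l_J(u^\ast,v^\ast,w^\ast)]\big| \le 2\sup_{u,v,w}\big| E_{\mathcal{D}}[l_J(u,v,w)] - E_S[l_J(u,v,w)]\big|.$$
   Context: Setting: $\mathcal{X}\subset\mathbb{R}^D$ is a feature space; $y$ is a private variable and $z$ a target variable. A filter $g(\cdot;u):\mathcal{X}\to\mathbb{R}^d$ is parameterized by $u\in\mathcal{U}$; predictors $h_p(\cdot;v)$ ($v\in\mathcal{V}$) and $h_u(\cdot;w)$ ($w\in\mathcal{W}$) act on filter outputs; $l_p,l_u$ are real-valued loss functions. The sets $\mathcal{U},\mathcal{V},\mathcal{W}$ are compact convex subsets of Euclidean spaces, and $g,h_p,h_u,l_p,l_u$ are continuous, so that all minima/maxima are attained. Notation: $l_p(u,v)$ stands for the random quantity $l_p(h_p(g(x;u);v),y)$, $l_u(u,w)$ for $l_u(h_u(g(x;u);w),z)$, and $l_J(u,v,w)$ for $l_J(x,y,z;u,v,w)$. $E_{\mathcal{D}}[\cdot]$ denotes expectation with $(x,y,z)\sim\mathcal{D}$, and $E_S[f]=\frac1N\sum_{(x,y,z)\in S} f(x,y,z)$ the empirical mean over $S$. *)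

From HB Require Import structures.
From mathcomp Require Import all_boot all_order all_algebra.
From mathcomp Require Import all_classical all_reals all_analysis.
Set Implicit Arguments. Unset Strict Implicit. Unset Printing Implicit Defensive.
Import Order.TTheory GRing.Theory Num.Theory.
Local Open Scope classical_set_scope.
Local Open Scope ring_scope.

(* Expectation E_D[f] of a real function under a probability P (real-valued;
   used only for integrable f, see the hypotheses of theorem1). *)
Definition ED (R : realType) (d : measure_display) (T : measurableType d)
  (P : probability T R) (f : T -> R) : R := Rintegral P setT f.

Definition ES (R : realType) (T : Type) (S : seq T) (f : T -> R) : R :=
  (size S)%:R^-1 * \sum_(s <- S) f s.

Definition lJ (R : realType) (X Y Z F U V W Yp Zp : Type)
  (g : X -> U -> F) (hp : F -> V -> Yp) (hu : F -> W -> Zp)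
  (lp : Yp -> Y -> R) (lu : Zp -> Z -> R) (rho : R)
  (u : U) (v : V) (w : W) (t : X * Y * Z) : R :=
  - lp (hp (g t.1.1 u) v) t.1.2 + rho * lu (hu (g t.1.1 u) w) t.2.

From HB Require Import structures.
From mathcomp Require Import all_boot all_order all_algebra.
From mathcomp Require Import all_classical all_reals all_analysis.
From mathcomp Require Import lra.
Set Implicit Arguments. Unset Strict Implicit. Unset Printing Implicit Defensive.
Import Order.TTheory GRing.Theory Num.Theory.
Local Open Scope classical_set_scope.
Local Open Scope ring_scope.

(* Let r bound |F - F_S| uniformly, where F = E_D[-l_p] + rho E_D[l_u] and F_S
   is its empirical counterpart.  As F is a sum of a function of v and a
   function of w, (v*(u), w*(u)) is a saddle point of F(u,.,.) and
   (v^(u), w^(u)) one of F_S(u,.,.).  Saddle values of r-close functions are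
   r-close, hence so are the two value functions of u, and then so are their
   minima.  The true risk F(u^,v^,w^) is within r of the empirical minimum
   F_S(u^,v^,w^), hence within 2r of the true minimum. *)

Section Stability.
Variable R : realFieldType.

Definition saddle_point (A B : Type) (V : set A) (W : set B) (F : A -> B -> R)
    (v0 : A) (w0 : B) :=
  [/\ V v0, W w0 & forall v w, V v -> W w -> F v w0 <= F v0 w0 <= F v0 w].

Lemma saddle_point_separable (A B : Type) (V : set A) (W : set B)
    (a : A -> R) (b : B -> R) (c : R) (v0 : A) (w0 : B) :
  0 <= c -> V v0 -> W w0 ->
  (forall v, V v -> a v <= a v0) -> (forall w, W w -> b w0 <= b w) ->
  saddle_point V W (fun v w => a v + c * b w) v0 w0.
Proof.
move=> c_ge0 Vv0 Ww0 a_max b_min; split=> // v w Vv Ww.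
by rewrite lerD2r a_max //= lerD2l ler_wpM2l // b_min.
Qed.

Lemma saddle_value_dist (A B : Type) (V : set A) (W : set B)
    (F F' : A -> B -> R) (v0 v1 : A) (w0 w1 : B) (r : R) :
  saddle_point V W F v0 w0 -> saddle_point V W F' v1 w1 ->
  (forall v w, V v -> W w -> `|F v w - F' v w| <= r) ->
  `|F v0 w0 - F' v1 w1| <= r.
Proof.
move=> [Vv0 Ww0 F_saddle] [Vv1 Ww1 F'_saddle] F_F'.
have /andP[_ F_w1] := F_saddle _ _ Vv0 Ww1.
have /andP[F'_v0 _] := F'_saddle _ _ Vv0 Ww1.
have /andP[F_v1 _] := F_saddle _ _ Vv1 Ww0.
have /andP[_ F'_w0] := F'_saddle _ _ Vv1 Ww0.
move: (F_F' _ _ Vv0 Ww1) (F_F' _ _ Vv1 Ww0).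
rewrite !ler_norml => /andP[? ?] /andP[? ?].
by apply/andP; split; lra.
Qed.

Lemma argmin_value_dist (A : Type) (U : set A) (G G' : A -> R) (u0 u1 : A)
    (r : R) :
  U u0 -> U u1 ->
  (forall u, U u -> G u0 <= G u) -> (forall u, U u -> G' u1 <= G' u) ->
  (forall u, U u -> `|G u - G' u| <= r) ->
  `|G u0 - G' u1| <= r.
Proof.
move=> Uu0 Uu1 G_min G'_min G_G'.
have := G_min _ Uu1; have := G'_min _ Uu0.
move: (G_G' _ Uu0) (G_G' _ Uu1); rewrite !ler_norml => /andP[? ?] /andP[? ?].
by move=> ? ?; apply/andP; split; lra.
Qed.

End Stability.

Lemma le_mul_ereal_sup (R : realType) (c x : R) (E : set \bar R) :
  0 < c -> (exists y : R, E y%:E) ->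
  (forall r : R, ubound E r%:E -> x <= c * r) ->
  (x%:E <= c%:E * ereal_sup E)%E.
Proof.
move=> c_gt0 [y Ey] x_le; have := @ereal_sup_ubound R E.
case: (ereal_sup E) => [r | | ] E_ub.
- by rewrite -EFinM lee_fin x_le.
- by rewrite mulry gtr0_sg // mul1e leey.
- by have := E_ub _ Ey; rewrite leeNy_eq.
Qed.

Lemma ED_lincomb (R : realType) (d : measure_display) (T : measurableType d)
    (P : probability T R) (f g : T -> R) (c : R) :
  P.-integrable setT (EFin \o f) -> P.-integrable setT (EFin \o g) ->
  ED P (fun t => f t + c * g t) = ED P f + c * ED P g.
Proof.
move=> If Ig; rewrite /ED RintegralD //; first by rewrite RintegralZl.
apply: eq_integrable measurableT _ _ _ (integrableZl measurableT c Ig).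
by move=> t _ /=; rewrite EFinM.
Qed.

Lemma ES_lincomb (R : realType) (T : Type) (S : seq T) (f g : T -> R) (c : R) :
  ES S (fun t => f t + c * g t) = ES S f + c * ES S g.
Proof. by rewrite /ES big_split mulrDr -big_distrr mulrCA. Qed.

Theorem theorem1 (R : realType)
  (dX dY dZ : measure_display)
  (X : measurableType dX) (Y : measurableType dY) (Z : measurableType dZ)
  (dd pu pv pw : nat) (Yp Zp : Type)
  (U : set 'rV[R]_pu) (V : set 'rV[R]_pv) (W : set 'rV[R]_pw)
  (g : X -> 'rV[R]_pu -> 'rV[R]_dd)
  (hp : 'rV[R]_dd -> 'rV[R]_pv -> Yp) (hu : 'rV[R]_dd -> 'rV[R]_pw -> Zp)
  (lp : Yp -> Y -> R) (lu : Zp -> Z -> R) (rho : R)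
  (P : probability (X * Y * Z)%type R) (S : seq (X * Y * Z)%type)
  (vstar : 'rV[R]_pu -> 'rV[R]_pv) (wstar : 'rV[R]_pu -> 'rV[R]_pw)
  (ustar : 'rV[R]_pu)
  (vhat : 'rV[R]_pu -> 'rV[R]_pv) (what : 'rV[R]_pu -> 'rV[R]_pw)
  (uhat : 'rV[R]_pu) :
  0 < rho ->
  (* the expectations E_D[l_p(u,v)] and E_D[l_u(u,w)] are finite *)
  (forall u v, U u -> V v ->
     P.-integrable setT (fun t => (lp (hp (g t.1.1 u) v) t.1.2)%:E)) ->
  (forall u w, U u -> W w ->
     P.-integrable setT (fun t => (lu (hu (g t.1.1 u) w) t.2)%:E)) ->
  (* expected-risk solution: ustar, vstar ustar, wstar ustar *)
  (forall u, U u -> V (vstar u) /\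
     forall v, V v -> ED P (fun t => - lp (hp (g t.1.1 u) v) t.1.2)
                      <= ED P (fun t => - lp (hp (g t.1.1 u) (vstar u)) t.1.2)) ->
  (forall u, U u -> W (wstar u) /\
     forall w, W w -> ED P (fun t => lu (hu (g t.1.1 u) (wstar u)) t.2)
                      <= ED P (fun t => lu (hu (g t.1.1 u) w) t.2)) ->
  U ustar ->
  (forall u, U u -> ED P (lJ g hp hu lp lu rho ustar (vstar ustar) (wstar ustar))
                    <= ED P (lJ g hp hu lp lu rho u (vstar u) (wstar u))) ->
  (* empirical solution: uhat, vhat uhat, what uhat *)
  (forall u, U u -> V (vhat u) /\
     forall v, V v -> ES S (fun t => - lp (hp (g t.1.1 u) v) t.1.2)
                      <= ES S (fun t => - lp (hp (g t.1.1 u) (vhat u)) t.1.2)) ->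
  (forall u, U u -> W (what u) /\
     forall w, W w -> ES S (fun t => lu (hu (g t.1.1 u) (what u)) t.2)
                      <= ES S (fun t => lu (hu (g t.1.1 u) w) t.2)) ->
  U uhat ->
  (forall u, U u -> ES S (lJ g hp hu lp lu rho uhat (vhat uhat) (what uhat))
                    <= ES S (lJ g hp hu lp lu rho u (vhat u) (what u))) ->
  ((`| ED P (lJ g hp hu lp lu rho uhat (vhat uhat) (what uhat))
       - ED P (lJ g hp hu lp lu rho ustar (vstar ustar) (wstar ustar)) |)%:E
   <= 2%:E * ereal_sup
        [set e | exists u v w, [/\ U u, V v, W w &
           e = (`| ED P (lJ g hp hu lp lu rho u v w)
                   - ES S (lJ g hp hu lp lu rho u v w) |)%:E]])%E.
Proof.
move=> rho_gt0 lp_int lu_int vstar_max wstar_min Uustar ustar_min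
  vhat_max what_min Uuhat uhat_min.
pose F u v w := ED P (fun t => - lp (hp (g t.1.1 u) v) t.1.2)
  + rho * ED P (fun t => lu (hu (g t.1.1 u) w) t.2).
pose F' u v w := ES S (fun t => - lp (hp (g t.1.1 u) v) t.1.2)
  + rho * ES S (fun t => lu (hu (g t.1.1 u) w) t.2).
have ED_lJ u v w :
    U u -> V v -> W w -> ED P (lJ g hp hu lp lu rho u v w) = F u v w.
  move=> Uu Vv Ww; apply: ED_lincomb; last exact: lu_int.
  exact: integrableN (lp_int u v Uu Vv).
have ES_lJ u v w : ES S (lJ g hp hu lp lu rho u v w) = F' u v w.
  exact: ES_lincomb.
have [[Vvstar _] [Wwstar _]] := (vstar_max _ Uustar, wstar_min _ Uustar).
apply: le_mul_ereal_sup => //.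
  by eexists; exists ustar, (vstar ustar), (wstar ustar).
move=> r r_ub.
have F_F' u v w : U u -> V v -> W w -> `|F u v w - F' u v w| <= r.
  move=> Uu Vv Ww; rewrite -ED_lJ // -ES_lJ -lee_fin.
  by apply: r_ub; exists u, v, w.
have value_dist u :
    U u -> `|F u (vstar u) (wstar u) - F' u (vhat u) (what u)| <= r.
  move=> Uu; have [[Vs vs_max] [Ws ws_min]] := (vstar_max _ Uu, wstar_min _ Uu).
  have [[Vh vh_max] [Wh wh_min]] := (vhat_max _ Uu, what_min _ Uu).
  apply: (saddle_value_dist (F := F u) (F' := F' u)).
  - exact: saddle_point_separable (ltW rho_gt0) Vs Ws vs_max ws_min.
  - exact: saddle_point_separable (ltW rho_gt0) Vh Wh vh_max wh_min.
  - by move=> v w; apply: F_F'.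
have min_dist : `|F ustar (vstar ustar) (wstar ustar)
                  - F' uhat (vhat uhat) (what uhat)| <= r.
  apply: (argmin_value_dist Uustar Uuhat _ _ value_dist) => u Uu.
    rewrite -!ED_lJ ?ustar_min //.
    - exact: (vstar_max _ Uu).1.
    - exact: (wstar_min _ Uu).1.
  by rewrite -!ES_lJ uhat_min.
have [[Vvhat _] [Wwhat _]] := (vhat_max _ Uuhat, what_min _ Uuhat).
rewrite !ED_lJ //.
apply: le_trans (ler_distD (F' uhat (vhat uhat) (what uhat)) _ _) _.
by rewrite mulr_natl mulr2n lerD ?F_F' // distrC.
Qed.
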